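(* Let $f \in \mathbb{F}_q[x]$ be a squarefree polynomial of degree $n$. Let $\tilde{f}$ be the product of the irreducible factors of $f$ of degree higher than $n^{2 / 3}$. Then the order of the Frobenius automorphism $\sigma$ of $\mathbb{F}_q[x] / \tilde{f}$ (the $\mathbb{F}_q$-algebra automorphism determined by $x\mapsto x^q$) is less than $\exp\!\left(\frac{2}{3}\sqrt[3]{n} \ln n\right)$.
   Formalization: The degree n of f is assumed to satisfy n ≥ 4, so the bound on the order of σ covers only n ≥ 4. The statement above fails without it. *)

From HB Require Import structures.
From mathcomp Require Import all_boot all_order all_algebra.
From mathcomp Require Import boolp reals sequences exp.
Set Implicit Arguments. Unset Strict Implicit. Unset Printing Implicit Defensive.
Import Order.TTheory GRing.Theory Num.Theory.
Local Open Scope ring_scope.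

Definition squarefree_poly (F : fieldType) (f : {poly F}) : Prop :=
  f != 0 /\ forall g : {poly F}, g * g %| f -> (size g <= 1)%N.

(* Each divisor of f has size <= size f, hence is \poly_(i < size f) c`_i
   for a unique tuple c; so the product runs over each such factor exactly once. *)
Definition ftilde (R : realType) (F : finFieldType) (f : {poly F}) : {poly F} :=
  \prod_(c : (size f).-tuple F |
          [&& (\poly_(i < size f) c`_i) \is monic,
              `[< irreducible_poly (\poly_(i < size f) c`_i) >],
              (\poly_(i < size f) c`_i) %| f &
              (((size f).-1)%:R `^ (2/3) < ((size (\poly_(i < size f) c`_i)).-1)%:R :> R)])
     \poly_(i < size f) c`_i.

Definition frob (F : finFieldType) (h : {poly F}) (p : {poly F}) : {poly F} :=
  (p \Po 'X^#|F|) %% h.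

Definition frob_iter_id (F : finFieldType) (h : {poly F}) (k : nat) : Prop :=
  forall p : {poly F}, (iter k (frob h) p) %% h = p %% h.

Definition is_frob_order (F : finFieldType) (h : {poly F}) (k : nat) : Prop :=
  [/\ (0 < k)%N, frob_iter_id h k & forall j, (0 < j < k)%N -> ~ frob_iter_id h j].

From HB Require Import structures.
From mathcomp Require Import all_boot all_order all_algebra.
From mathcomp Require Import boolp reals sequences exp.
From mathcomp Require Import finfield qfpoly ring lra zify.
Import Order.TTheory GRing.Theory Num.Theory.
Local Open Scope ring_scope.

(* Write f~ = g_1 ... g_r with distinct monic irreducible g_i of degrees d_i.
   F_q[x]/(g_i) is a field with q^(d_i) elements, so g_i divides p^(q^k) - p
   whenever d_i divides k; as the g_i are pairwise coprime, sigma^K is the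
   identity of F_q[x]/(f~) for K = d_1 ... d_r, and the order of sigma is at
   most K.  Since d_i > n^(2/3) and d_1 + ... + d_r <= n, the number r of
   factors is less than t := n^(1/3), and concavity of ln gives
     ln K = sum ln d_i <= r (ln t^2 - 1) + n / t^2 < 2 t ln t = (2/3) t ln n,
   the strict inequality being (t - r) (2 ln t - 1) > 0, valid once r >= 2
   forces t > 2 (when r <= 1, simply K <= n). *)

Lemma dvdp_subXX (R : idomainType) (h a b : {poly R}) k :
  h %| a - b -> h %| a ^+ k - b ^+ k.
Proof. by move=> hab; rewrite subrXX dvdp_mulr. Qed.

Lemma coprimep_monic_irr (R : idomainType) (g g' : {poly R}) :
  g \is monic -> irreducible_poly g -> g' \is monic -> irreducible_poly g' ->
  g != g' -> coprimep g g'.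
Proof.
move=> mg ig mg' [g'_gt1 g'_irr] neq; rewrite irreducible_poly_coprime //.
apply: contra neq => gg'; rewrite -eqp_monic //.
by apply: g'_irr gg'; rewrite neq_ltn ig.1 orbT.
Qed.

Lemma prod_monic_irr_dvdp (R : idomainType) (s : seq {poly R}) (p : {poly R}) :
  uniq s -> (forall g, g \in s -> [/\ g \is monic, irreducible_poly g & g %| p]) ->
  \prod_(g <- s) g %| p.
Proof.
elim: s => [|g s IHs] /=; first by rewrite big_nil dvd1p.
case/andP => g_notin_s s_uniq sP; have [mg ig gp] := sP g (mem_head _ _).
have {}sP g' : g' \in s -> [/\ g' \is monic, irreducible_poly g' & g' %| p].
  by move=> g's; apply: sP; rewrite inE g's orbT.
rewrite big_cons Gauss_dvdp ?gp ?IHs //.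
rewrite big_seq; elim/big_rec: _ => [|g' r g's cop]; first exact: coprimep1.
have [mg' ig' _] := sP g' g's.
rewrite coprimepMr cop andbT coprimep_monic_irr //.
by apply: contraNneq g_notin_s => ->.
Qed.

Lemma predn_size_prod_seq (R : idomainType) (s : seq {poly R}) :
  (forall g, g \in s -> g != 0) ->
  (size (\prod_(g <- s) g)).-1 = (\sum_(g <- s) (size g).-1)%N.
Proof.
elim: s => [|g s IHs] s_neq0; first by rewrite !big_nil size_poly1.
have {}IHs : (size (\prod_(g <- s) g)).-1 = (\sum_(g <- s) (size g).-1)%N.
  by apply: IHs => g' g's; apply: s_neq0; rewrite inE g's orbT.
have g0 : g != 0 by apply: s_neq0; rewrite mem_head.
have p0 : \prod_(g <- s) g != 0.
  by rewrite prodf_seq_neq0; apply/allP => g' g's; apply: s_neq0; rewrite inE g's orbT.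
rewrite !big_cons size_mul // -IHs; rewrite -!size_poly_gt0 in g0 p0; lia.
Qed.

Section FiniteField.
Variable F : finFieldType.
Local Notation q := #|F|.

Lemma pnat_card_pchar_poly : [pchar {poly F}].-nat q.
Proof.
have [p _ pchar_p] := finPcharP F.
rewrite (eq_pnat _ (@pchar_poly F)) (eq_pnat _ (pcharf_eq pchar_p)).
by rewrite (card_pprimeChar pchar_p) pnatX pnat_id ?orbT // (pcharf_prime pchar_p).
Qed.

Lemma comp_poly_Xcard (p : {poly F}) : p \Po 'X^q = p ^+ q.
Proof.
have q_gt0 : (0 < q)%N by rewrite (leq_trans _ (finNzRing_gt1 F)).
have expq_add : {morph (fun r : {poly F} => r ^+ q) : a b / a + b}.
  by move=> a b; exact: exprDn_pchar pnat_card_pchar_poly.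
rewrite comp_polyE -[in RHS](coefK p) poly_def.
rewrite (big_morph _ expq_add (expr0n _ _)) eqn0Ngt q_gt0.
by apply: eq_bigr => i _; rewrite exprZn expf_card -!exprM mulnC.
Qed.

Lemma frob_iter_dvdp (h p : {poly F}) k :
  h %| iter k (frob h) p - p ^+ (q ^ k).
Proof.
elim: k => [|k IHk]; first by rewrite subrr dvdp0.
rewrite iterS {1}/frob comp_poly_Xcard expnSr exprM.
set r := iter k (frob h) p.
have r_mod : h %| (r ^+ q) %% h - r ^+ q.
  by rewrite {2}(divp_eq (r ^+ q) h) opprD addrCA subrr addr0 dvdpNr dvdp_mull.
by rewrite -(subrK (r ^+ q) (_ %% h)) -addrA dvdp_add ?dvdp_subXX.
Qed.

Lemma frob_iter_id_of_dvdp (h : {poly F}) k :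
  (forall p, h %| p ^+ (q ^ k) - p) -> frob_iter_id h k.
Proof.
move=> hk p; apply/eqP; rewrite -subr_eq0 -modpN -modpD; apply/eqP/modp_eq0P.
by rewrite -(subrK (p ^+ (q ^ k)) (iter _ _ _)) -addrA dvdp_add ?frob_iter_dvdp.
Qed.

Lemma dvdp_fermat_irr (g p : {poly F}) : g \is monic -> irreducible_poly g ->
  g %| p ^+ (q ^ (size g).-1) - p.
Proof.
move=> mg ig; pose mi : monic_irreducible_poly g := (ig, mg).
have : in_qpoly g (p ^+ (q ^ (size g).-1) - p) = 0.
  rewrite raddfB /= rmorphXn -(card_qfpoly mi).
  by rewrite (expf_card (in_qpoly g p : {poly %/ g with mi})) subrr.
move/(congr1 val) => /=; rewrite mk_monicE //.
by rewrite -(Pdiv.IdomainMonic.modpE mg) => /modp_eq0P.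
Qed.

Lemma dvdp_fermat_irr_dvdn (g p : {poly F}) k : g \is monic -> irreducible_poly g ->
  ((size g).-1 %| k)%N -> g %| p ^+ (q ^ k) - p.
Proof.
move=> mg ig /dvdnP [j ->]; elim: j => [|j IHj]; first by rewrite subrr dvdp0.
rewrite mulSnr expnD exprM -(subrK (p ^+ (q ^ (j * (size g).-1))) (_ ^+ _)).
by rewrite -addrA dvdp_add ?dvdp_fermat_irr.
Qed.

End FiniteField.

Lemma is_frob_order_exists (F : finFieldType) (h : {poly F}) K :
  (0 < K)%N -> frob_iter_id h K -> exists2 k, is_frob_order h k & (k <= K)%N.
Proof.
move=> K_gt0 hK; pose P k := `[< (0 < k)%N /\ frob_iter_id h k >].
have exP : exists k, P k by exists K; apply/asboolP.
case: (ex_minnP exP) => k /asboolP [k_gt0 hk] k_min.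
exists k; last by apply: k_min; apply/asboolP.
split=> // j /andP [j_gt0 jk] hj.
by have := k_min j (asboolT (conj j_gt0 hj)); rewrite leqNgt jk.
Qed.

Lemma ftilde_prod_seq (R : realType) (F : finFieldType) (f : {poly F}) :
  exists s : seq {poly F}, [/\ uniq s, ftilde R f = \prod_(g <- s) g &
    forall g, g \in s -> [/\ g \is monic, irreducible_poly g, g %| f &
      ((size f).-1%:R `^ (2/3) < (size g).-1%:R :> R)]].
Proof.
pose G (c : (size f).-tuple F) := \poly_(i < size f) c`_i.
have G_inj : injective G.
  move=> c c' eqG; apply: eq_from_tnth => i.
  by have := congr1 (fun p : {poly F} => p`_i) eqG; rewrite /= !coef_poly ltn_ord -!tnth_nth.
exists [seq G c | c <- index_enum _ & [&& G c \is monic, `[< irreducible_poly (G c) >],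
  G c %| f & (size f).-1%:R `^ (2/3) < (size (G c)).-1%:R :> R]]; split.
- by rewrite map_inj_uniq // filter_uniq // index_enum_uniq.
- by rewrite big_map big_filter.
- move=> g /mapP [c]; rewrite mem_filter => /andP [+ _] ->.
  by case/and4P => mg /asboolP ig gf deg_g.
Qed.

Section RealBound.
Variable R : realType.

Lemma ln_le_tangent (a x : R) : 0 < a -> 0 < x -> ln x <= ln a + x / a - 1.
Proof.
move=> a_gt0 x_gt0; have xa_gt0 : 0 < x / a by rewrite divr_gt0.
have -> : ln x = ln a + ln (x / a).
  by rewrite -lnM ?posrE // mulrC divfK // gt_eqF.
have := @le_ln1Dx R (x / a - 1); rewrite addrCA subrr addr0; lra.
Qed.

Lemma sum_ln_le (a : R) (D : seq nat) : 0 < a -> (forall d, d \in D -> (0 < d)%N) ->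
  \sum_(d <- D) ln (d%:R : R) <= (size D)%:R * (ln a - 1) + (\sum_(d <- D) d)%N%:R / a.
Proof.
move=> a_gt0 D_gt0.
rewrite natr_sum mulr_suml -[size D]sum1_size natr_sum mulr_suml -big_split.
rewrite big_seq_cond [X in _ <= X]big_seq_cond; apply: ler_sum => d /andP [dD _].
by rewrite mul1r /= addrAC ln_le_tangent // ltr0n D_gt0.
Qed.

Lemma size_mul_lt_sum (a : R) (D : seq nat) : D != [::] ->
  (forall d, d \in D -> a < d%:R) -> (size D)%:R * a < (\sum_(d <- D) d)%N%:R.
Proof.
move=> D_neq0 D_gt; rewrite natr_sum -[size D]sum1_size natr_sum mulr_suml.
rewrite big_seq_cond [X in _ < X]big_seq_cond; apply: ltr_sum.
  by case: D D_neq0 {D_gt} => // d D _; apply/hasP; exists d; rewrite ?mem_head.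
by move=> d /andP [dD _]; rewrite mul1r D_gt.
Qed.

Lemma ln_gt_half (x : R) : 2 < x -> 1/2 < ln x.
Proof.
move=> x_gt2; have e_gt0 := @expR_gt0 R (1/2).
have e_le2 : expR (1/2 : R) <= 2.
  have eN : expR (1/2 : R) * expR (- (1/2)) = 1 by rewrite -expRD subrr expR0.
  have := @expR_ge1Dx R (- (1/2)); nra.
by rewrite -ltr_expR lnK ?posrE; lra.
Qed.

Lemma powR_third (x : R) k : 0 <= x -> x `^ (k%:R / 3) = (x `^ (1/3)) ^+ k.
Proof. by move=> x_ge0; rewrite -powR_mulrn ?powR_ge0 // -powRrM mulrC mul1r. Qed.

Lemma prod_lt_expR_cube (t : R) (D : seq nat) : 3/2 < t ->
  (forall d, d \in D -> t ^+ 2 < d%:R) -> (\sum_(d <- D) d)%N%:R <= t ^+ 3 ->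
  (\prod_(d <- D) d)%N%:R < expR (2 * t * ln t).
Proof.
move=> t_gt32 D_gt D_sum; have t_gt0 : 0 < t by lra.
have lnt_gt0 : 0 < ln t by apply: ln_gt0; lra.
have [D_le1 | D_gt1] := leqP (size D) 1.
  have D_prod : (\prod_(d <- D) d)%N%:R <= t ^+ 3.
    case: D D_le1 D_sum {D_gt} => [|d []] // _; rewrite ?big_nil ?big_seq1 //.
    by move=> _; rewrite !exprS expr0; nra.
  rewrite (le_lt_trans D_prod) // -[X in X < _]lnK ?posrE ?exprn_gt0 // lnXn // ltr_expR.
  by rewrite -mulr_natl; nra.
have D_gt0 d : d \in D -> (0 < d)%N.
  by move/D_gt => d_gt; rewrite -(ltr0n R) (lt_trans _ d_gt) ?exprn_gt0.
have m_lt_t : (size D)%:R < t.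
  have D_neq0 : D != [::] by case: D D_gt1 {D_gt D_sum D_gt0}.
  rewrite -(ltr_pM2r (exprn_gt0 2 t_gt0)) -exprS.
  exact: lt_le_trans (size_mul_lt_sum _ _ D_neq0 D_gt) D_sum.
have lnt_gt_half : 1/2 < ln t.
  by apply: ln_gt_half; move: m_lt_t; rewrite -(ler_nat R 2) in D_gt1; lra.
have -> : (\prod_(d <- D) d)%N%:R = expR (\sum_(d <- D) ln (d%:R : R)).
  rewrite natr_prod expR_sum big_seq [RHS]big_seq; apply: eq_bigr => d dD.
  by rewrite lnK // posrE ltr0n D_gt0.
have sum_div : (\sum_(d <- D) d)%N%:R / t ^+ 2 <= t.
  by rewrite ler_pdivrMr ?exprn_gt0 // -exprS.
have := sum_ln_le _ _ (exprn_gt0 2 t_gt0) D_gt0.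
rewrite lnXn // ltr_expR -mulr_natl => sum_le.
have : 0 < (t - (size D)%:R) * (2 * ln t - 1) by rewrite mulr_gt0 //; lra.
nra.
Qed.

Lemma prod_lt_expR (n : nat) (D : seq nat) : (4 <= n)%N ->
  (forall d, d \in D -> n%:R `^ (2/3) < d%:R :> R) -> (\sum_(d <- D) d <= n)%N ->
  (\prod_(d <- D) d)%N%:R < expR (2/3 * n%:R `^ (1/3) * ln (n%:R : R)).
Proof.
move=> n_ge4 D_gt D_sum; have N_ge4 : 4 <= n%:R :> R by rewrite (ler_nat R 4 n).
set t := n%:R `^ (1/3); have t_gt0 : 0 < t by rewrite powR_gt0 //; lra.
have N_t3 : n%:R = t ^+ 3 by rewrite -powR_third ?divff ?powRr1 //; lra.
have t_gt32 : 3/2 < t.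
  rewrite ltNge; apply/negP => t_le; have : t * t <= 9/4 by nra.
  by move: N_ge4; rewrite N_t3 !exprS expr0 mulr1; nra.
have -> : 2/3 * t * ln n%:R = 2 * t * ln t.
  by rewrite N_t3 lnXn // -[_ *+ 3]mulr_natr; field.
apply: prod_lt_expR_cube => // [d /D_gt|]; first by rewrite powR_third.
by rewrite -N_t3 ler_nat.
Qed.

End RealBound.

Theorem lemma1 (R : realType) (F : finFieldType) (f : {poly F}) (n : nat)
  (hf : squarefree_poly f) (hn : (size f).-1 = n) (hn4 : (4 <= n)%N) :
  exists k : nat, is_frob_order (ftilde R f) k /\
    k%:R < expR ((2/3) * n%:R `^ (1/3) * ln (n%:R : R)).
Proof.
(* Squarefreeness of f is only used through f != 0: f~ has distinct factors by construction. *)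
have f_neq0 : f != 0 by case: hf.
have [s [s_uniq ftildeE sP]] := ftilde_prod_seq R F f.
have ftilde_dvd_f : ftilde R f %| f.
  by rewrite ftildeE prod_monic_irr_dvdp // => g /sP [].
pose D := [seq (size g).-1 | g : {poly F} <- s].
have D_gt0 d : d \in D -> (0 < d)%N.
  by case/mapP => g /sP [_ [g_gt1 _] _ _] ->; rewrite -ltnS prednK // ltnW.
have D_sum : (\sum_(d <- D) d <= n)%N.
  rewrite big_map -predn_size_prod_seq -?ftildeE -?hn.
    by rewrite -!subn1 leq_sub2r // dvdp_leq.
  by move=> g /sP [_ /irredp_neq0].
have D_gt d : d \in D -> n%:R `^ (2/3) < d%:R :> R.
  by case/mapP => g /sP [_ _ _]; rewrite hn => deg_g ->.
have [k k_order k_le] : exists2 k, is_frob_order (ftilde R f) k & (k <= \prod_(d <- D) d)%N.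
  apply: is_frob_order_exists; first by rewrite big_seq prodn_cond_gt0.
  apply: frob_iter_id_of_dvdp => p; rewrite ftildeE prod_monic_irr_dvdp // => g gs.
  have [mg ig _ _] := sP g gs; split=> //; apply: dvdp_fermat_irr_dvdn => //.
  by rewrite (big_rem _ (map_f _ gs)) dvdn_mulr.
exists k; split=> //.
by apply: le_lt_trans (prod_lt_expR _ _ _ hn4 D_gt D_sum); rewrite ler_nat.
Qed.
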